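(* Let $\theta\in[0,1]$, $\Delta t,\Delta x>0$, and $\mathcal A_\theta=I+\theta\Delta tD_+D_+D_-$. For every sequence $a\in\ell^2_\Delta(\mathbb Z)$, $$\|\mathcal A_\theta a\|^2_{\ell^2_\Delta}=\|a\|^2_{\ell^2_\Delta}+\theta\Delta t\Delta x\|D_+D_-(a)\|^2_{\ell^2_\Delta}+\theta^2\Delta t^2\|D_+D_+D_-(a)\|^2_{\ell^2_\Delta}.$$
   Context: For a sequence $a=(a_j)_{j\in\mathbb Z}$: $D_+(a)_j=(a_{j+1}-a_j)/\Delta x$, $D_-(a)_j=(a_j-a_{j-1})/\Delta x$; $\|a\|_{\ell^2_\Delta}=(\Delta x\sum_j a_j^2)^{1/2}$; $I$ is the identity. *)

From Stdlib Require Import Reals ZArith.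
From Coquelicot Require Import Coquelicot.
Open Scope R_scope.

Definition seqZ := Z -> R.

Definition Dp (dx : R) (a : seqZ) : seqZ := fun j => (a (j + 1)%Z - a j) / dx.
Definition Dm (dx : R) (a : seqZ) : seqZ := fun j => (a j - a (j - 1)%Z) / dx.

(* Two-sided sum over Z of nonnegative terms, via the series over nat
   of f(n) + f(-n-1) (indices 0,1,2,... and -1,-2,...). *)
Definition sqfold (a : seqZ) (n : nat) : R :=
  (a (Z.of_nat n)) ^ 2 + (a (- Z.of_nat n - 1)%Z) ^ 2.

Definition in_l2 (a : seqZ) : Prop := ex_series (sqfold a).

Definition l2norm (dx : R) (a : seqZ) : R := sqrt (dx * Series (sqfold a)).

Definition Atheta (theta dt dx : R) (a : seqZ) : seqZ :=
  fun j => a j + theta * dt * Dp dx (Dp dx (Dm dx a)) j.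

(* Write b = D-a, c = D+b and d = D+c, so that A a = a + s d with s = theta dt.
   Expanding the square, the only term that is not already a norm is the
   cross term 2 s <a, d>.  Summation by parts moves one D+ across as -D-,
   giving <a, d> = -<b, D+ b>, and the identity
   (b_{j+1} - b_j)^2 = b_{j+1}^2 - b_j^2 - 2 b_j (b_{j+1} - b_j), summed over
   Z where the telescoping part vanishes, gives -<b, D+ b> = dx/2 |c|^2. *)

From Stdlib Require Import Reals Lia Lra ZArith.
From Coquelicot Require Import Coquelicot.
Open Scope R_scope.

Definition zsummable (f : Z -> R) : Prop :=
  ex_series (fun n : nat => Rabs (f (Z.of_nat n))) /\
  ex_series (fun n : nat => Rabs (f (- Z.of_nat n - 1)%Z)).

Definition zsum (f : Z -> R) : R :=
  Series (fun n : nat => f (Z.of_nat n)) + Series (fun n : nat => f (- Z.of_nat n - 1)%Z).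

Lemma ex_series_Rabs_le (u v : nat -> R) :
  (forall n, Rabs (u n) <= v n) -> ex_series v -> ex_series (fun n => Rabs (u n)).
Proof.
  intros Huv; apply (ex_series_le (K := R_AbsRing) (V := R_CompleteNormedModule)); intro n.
  change (Rabs (Rabs (u n)) <= v n); rewrite Rabs_Rabsolu; apply Huv.
Qed.

Lemma zsummable_le (f g : Z -> R) :
  (forall j, Rabs (f j) <= Rabs (g j)) -> zsummable g -> zsummable f.
Proof.
  intros Hfg [Hp Hn]; split;
    [apply ex_series_Rabs_le with (2 := Hp) | apply ex_series_Rabs_le with (2 := Hn)];
    intro n; apply Hfg.
Qed.

Lemma zsummable_ext (f g : Z -> R) :
  (forall j, f j = g j) -> zsummable f -> zsummable g.
Proof. intros Hfg; apply zsummable_le; intro j; rewrite Hfg; lra. Qed.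

Lemma zsum_ext (f g : Z -> R) : (forall j, f j = g j) -> zsum f = zsum g.
Proof.
  intros Hfg; unfold zsum.
  rewrite (Series_ext _ (fun n => g (Z.of_nat n))) by auto.
  rewrite (Series_ext (fun n => f _) (fun n => g (- Z.of_nat n - 1)%Z)) by auto.
  reflexivity.
Qed.

Lemma ex_series_Rabs_lin (x y : R) (u v : nat -> R) :
  ex_series (fun n => Rabs (u n)) -> ex_series (fun n => Rabs (v n)) ->
  ex_series (fun n => Rabs (x * u n + y * v n)).
Proof.
  intros Hu Hv.
  apply ex_series_Rabs_le with (fun n => Rabs x * Rabs (u n) + Rabs y * Rabs (v n)).
  - intro n; rewrite <- !Rabs_mult; apply Rabs_triang.
  - apply (ex_series_plus (V := R_NormedModule) (fun n => Rabs x * _) (fun n => Rabs y * _));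
      apply (ex_series_scal_l (V := R_NormedModule)); assumption.
Qed.

Lemma zsummable_lin (x y : R) (f g : Z -> R) :
  zsummable f -> zsummable g -> zsummable (fun j => x * f j + y * g j).
Proof. intros [Fp Fn] [Gp Gn]; split; apply ex_series_Rabs_lin; assumption. Qed.

Lemma zsum_lin (x y : R) (f g : Z -> R) :
  zsummable f -> zsummable g -> zsum (fun j => x * f j + y * g j) = x * zsum f + y * zsum g.
Proof.
  intros [Fp Fn] [Gp Gn]; unfold zsum.
  apply ex_series_Rabs in Fp, Fn, Gp, Gn.
  rewrite !Series_plus, !Series_scal_l; try lra;
    apply (ex_series_scal_l (V := R_NormedModule)); assumption.
Qed.

Lemma zsummable_succ (f : Z -> R) : zsummable f -> zsummable (fun j => f (j + 1)%Z).
Proof.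
  intros [Fp Fn]; split.
  - apply ex_series_incr_1 in Fp; eapply ex_series_ext; [|exact Fp].
    intro n; cbv beta; do 2 f_equal; lia.
  - apply ex_series_incr_1; eapply ex_series_ext; [|exact Fn].
    intro n; cbv beta; do 2 f_equal; lia.
Qed.

Lemma zsummable_pred (f : Z -> R) : zsummable f -> zsummable (fun j => f (j - 1)%Z).
Proof.
  intros [Fp Fn]; split.
  - apply ex_series_incr_1; eapply ex_series_ext; [|exact Fp].
    intro n; cbv beta; do 2 f_equal; lia.
  - apply ex_series_incr_1 in Fn; eapply ex_series_ext; [|exact Fn].
    intro n; cbv beta; do 2 f_equal; lia.
Qed.

(* Shifting by one moves the term f 0 from the nonnegative half to the negative one. *)
Lemma zsum_succ (f : Z -> R) : zsummable f -> zsum (fun j => f (j + 1)%Z) = zsum f.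
Proof.
  intros [Fp Fn]; apply ex_series_Rabs in Fp, Fn; unfold zsum.
  assert (Hp : Series (fun n : nat => f (Z.of_nat n))
               = f 0%Z + Series (fun n : nat => f (Z.of_nat n + 1)%Z)).
  { rewrite Series_incr_1 by exact Fp; f_equal; apply Series_ext; intro n; f_equal; lia. }
  assert (Hn0 : ex_series (fun n : nat => f (- Z.of_nat n)%Z)).
  { apply ex_series_incr_1; eapply ex_series_ext; [|exact Fn]; intro n; cbv beta; f_equal; lia. }
  assert (Hn : Series (fun n : nat => f (- Z.of_nat n)%Z)
               = f 0%Z + Series (fun n : nat => f (- Z.of_nat n - 1)%Z)).
  { rewrite Series_incr_1 by exact Hn0; f_equal; apply Series_ext; intro n; f_equal; lia. }
  rewrite (Series_ext (fun n => f (- Z.of_nat n - 1 + 1)%Z) (fun n => f (- Z.of_nat n)%Z))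
    by (intro n; f_equal; lia).
  lra.
Qed.

Lemma zsum_telescope (x y : R) (f h : Z -> R) :
  zsummable f -> zsummable h ->
  zsum (fun j => x * f j + y * (h (j + 1)%Z - h j)) = x * zsum f.
Proof.
  intros Hf Hh.
  assert (Hdiff : zsummable (fun j => 1 * h (j + 1)%Z + -1 * h j))
    by (apply zsummable_lin; [apply zsummable_succ|]; assumption).
  rewrite (zsum_ext _ (fun j => x * f j + y * (1 * h (j + 1)%Z + -1 * h j)))
    by (intro j; ring).
  rewrite zsum_lin, (zsum_lin 1 (-1)), zsum_succ by (try apply zsummable_succ; assumption).
  ring.
Qed.

Definition sq_summable (f : Z -> R) : Prop := zsummable (fun j => f j * f j).

Definition zdot (f g : Z -> R) : R := zsum (fun j => f j * g j).

Lemma zsummable_mul (f g : Z -> R) :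
  sq_summable f -> sq_summable g -> zsummable (fun j => f j * g j).
Proof.
  intros Hf Hg.
  apply zsummable_le with (g := fun j => /2 * (f j * f j) + /2 * (g j * g j)).
  - intro j; rewrite (Rabs_pos_eq (_ + _)) by nra.
    pose proof (Rle_0_sqr (f j + g j)); pose proof (Rle_0_sqr (f j - g j)); unfold Rsqr in *.
    apply Rabs_le; split; nra.
  - apply zsummable_lin; assumption.
Qed.

Lemma sq_summable_lin (x y : R) (f g : Z -> R) :
  sq_summable f -> sq_summable g -> sq_summable (fun j => x * f j + y * g j).
Proof.
  intros Hf Hg.
  apply zsummable_ext with
    (fun j => (x * x) * (f j * f j) + 1 * ((y * y) * (g j * g j) + (2 * x * y) * (f j * g j))).
  - intro j; ring.
  - apply zsummable_lin; [exact Hf|].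
    apply zsummable_lin; [exact Hg|apply zsummable_mul; assumption].
Qed.

Lemma sq_summable_ext (f g : Z -> R) :
  (forall j, f j = g j) -> sq_summable f -> sq_summable g.
Proof. intros Hfg; apply zsummable_ext; intro j; rewrite Hfg; reflexivity. Qed.

Lemma sq_summable_succ (f : Z -> R) : sq_summable f -> sq_summable (fun j => f (j + 1)%Z).
Proof. exact (zsummable_succ (fun j => f j * f j)). Qed.

Lemma sq_summable_pred (f : Z -> R) : sq_summable f -> sq_summable (fun j => f (j - 1)%Z).
Proof. exact (zsummable_pred (fun j => f j * f j)). Qed.

Lemma sq_summable_Dp (dx : R) (f : Z -> R) : sq_summable f -> sq_summable (Dp dx f).
Proof.
  intros Hf; apply sq_summable_ext with (fun j => / dx * f (j + 1)%Z + - / dx * f j).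
  - intro j; unfold Dp, Rdiv; ring.
  - apply sq_summable_lin; [apply sq_summable_succ|]; assumption.
Qed.

Lemma sq_summable_Dm (dx : R) (f : Z -> R) : sq_summable f -> sq_summable (Dm dx f).
Proof.
  intros Hf; apply sq_summable_ext with (fun j => / dx * f j + - / dx * f (j - 1)%Z).
  - intro j; unfold Dm, Rdiv; ring.
  - apply sq_summable_lin; [|apply sq_summable_pred]; assumption.
Qed.

Lemma zdot_Dp_r (dx : R) (f g : Z -> R) :
  sq_summable f -> sq_summable g -> zdot f (Dp dx g) = - zdot (Dm dx f) g.
Proof.
  intros Hf Hg; unfold zdot.
  rewrite (zsum_ext _ (fun j => -1 * (Dm dx f j * g j)
                                + / dx * (f (j + 1 - 1)%Z * g (j + 1)%Z - f (j - 1)%Z * g j))).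
  - rewrite (zsum_telescope _ _ _ (fun j => f (j - 1)%Z * g j)); [ring| |].
    + apply zsummable_mul; [apply sq_summable_Dm|]; assumption.
    + apply zsummable_mul; [apply sq_summable_pred|]; assumption.
  - intro j; replace (j + 1 - 1)%Z with j by ring; unfold Dp, Dm, Rdiv; ring.
Qed.

Lemma zdot_Dp_diag (dx : R) (f : Z -> R) :
  dx <> 0 -> sq_summable f -> zdot f (Dp dx f) = - (dx / 2) * zdot (Dp dx f) (Dp dx f).
Proof.
  intros Hdx Hf; unfold zdot.
  rewrite (zsum_ext _ (fun j => - (dx / 2) * (Dp dx f j * Dp dx f j)
                                + / (2 * dx) * (f (j + 1)%Z * f (j + 1)%Z - f j * f j))).
  - apply (zsum_telescope _ _ _ (fun j => f j * f j)); [apply sq_summable_Dp|]; assumption.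
  - intro j; unfold Dp; field; exact Hdx.
Qed.

Lemma zdot_add_scal_sq (s : R) (f g : Z -> R) :
  sq_summable f -> sq_summable g ->
  zdot (fun j => f j + s * g j) (fun j => f j + s * g j)
  = zdot f f + 2 * s * zdot f g + s ^ 2 * zdot g g.
Proof.
  intros Hf Hg; unfold zdot.
  rewrite (zsum_ext _ (fun j => 1 * (f j * f j)
                                + 1 * ((2 * s) * (f j * g j) + s ^ 2 * (g j * g j))))
    by (intro j; ring).
  rewrite !zsum_lin; try apply zsummable_lin; try apply zsummable_mul; auto.
  ring.
Qed.

Lemma in_l2_sq_summable (a : seqZ) : in_l2 a -> sq_summable a.
Proof.
  intros Ha; split; apply ex_series_Rabs_le with (2 := Ha); intro n;
    unfold sqfold; rewrite Rabs_pos_eq by apply Rle_0_sqr; nra.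
Qed.

Lemma l2norm_sq (dx : R) (f : seqZ) :
  0 <= dx -> sq_summable f -> l2norm dx f ^ 2 = dx * zdot f f.
Proof.
  intros Hdx [Hp Hn]; apply ex_series_Rabs in Hp, Hn.
  assert (Hsum : Series (sqfold f) = zdot f f).
  { unfold zdot, zsum; rewrite <- Series_plus by assumption.
    apply Series_ext; intro n; unfold sqfold; ring. }
  assert (Hex : ex_series (sqfold f)).
  { eapply ex_series_ext; [|exact (ex_series_plus (V := R_NormedModule) _ _ Hp Hn)].
    intro n; unfold sqfold; cbn; ring. }
  assert (Hpos : 0 <= Series (sqfold f)).
  { rewrite <- (Rmult_0_l (Series (sqfold f))), <- Series_scal_l.
    apply Series_le; [|exact Hex]; intro n; unfold sqfold; nra. }
  unfold l2norm; rewrite pow2_sqrt, Hsum by (apply Rmult_le_pos; assumption).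
  reflexivity.
Qed.

Theorem proposition4 (theta dt dx : R) (a : seqZ) :
  0 <= theta <= 1 -> 0 < dt -> 0 < dx -> in_l2 a ->
  (l2norm dx (Atheta theta dt dx a)) ^ 2 =
    (l2norm dx a) ^ 2
    + theta * dt * dx * (l2norm dx (Dp dx (Dm dx a))) ^ 2
    + theta ^ 2 * dt ^ 2 * (l2norm dx (Dp dx (Dp dx (Dm dx a)))) ^ 2.
Proof.
  intros _ _ Hdx Hl2.
  set (b := Dm dx a); set (c := Dp dx b); set (d := Dp dx c).
  assert (Ha : sq_summable a) by (apply in_l2_sq_summable; assumption).
  assert (Hb : sq_summable b) by (apply sq_summable_Dm; assumption).
  assert (Hc : sq_summable c) by (apply sq_summable_Dp; assumption).
  assert (Hd : sq_summable d) by (apply sq_summable_Dp; assumption).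
  assert (HA : sq_summable (Atheta theta dt dx a)).
  { apply sq_summable_ext with (fun j => 1 * a j + theta * dt * d j);
      [intro j; unfold Atheta; fold b c d; ring | apply sq_summable_lin; assumption]. }
  assert (Hcross : zdot a d = dx / 2 * zdot c c).
  { unfold d; rewrite zdot_Dp_r by assumption; fold b.
    unfold c; rewrite zdot_Dp_diag by (exact (Rgt_not_eq _ _ Hdx) || assumption); ring. }
  rewrite !l2norm_sq by (lra || assumption).
  unfold Atheta; fold b c d.
  rewrite zdot_add_scal_sq, Hcross by assumption.
  field.
Qed.
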